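(* Fix a parameter value $\boldsymbol{\theta}_r$ satisfying the large-sample (Bernstein–von Mises and maximum-likelihood regularity) conditions described in the context, write $\delta_r=\delta(\boldsymbol{\theta}_r)\in\mathbb{R}$ for the true value of the marginal estimand, and let $\Lambda(\boldsymbol{\theta}_r)>0$ be the corresponding asymptotic variance constant. Fix interval endpoints $-\infty\le \delta_L<\delta_U\le\infty$, a point $u_r\in(0,1)$, and distributions for the covariates $\mathbf{X}$, the random effects $\mathbf{W}$ and the cluster sizes $n_j$. For each number of clusters $c>0$ define $$\hat{\delta}^{(c)}_r=\delta_r+\Phi^{-1}(u_r)\sqrt{\frac{\Lambda(\boldsymbol{\theta}_r)}{c}},\qquad \tau^{(c)}_r=\Phi\!\left(\frac{\delta_U-\hat{\delta}^{(c)}_r}{\sqrt{c^{-1}\Lambda(\boldsymbol{\theta}_r)}}\right)-\Phi\!\left(\frac{\delta_L-\hat{\delta}^{(c)}_r}{\sqrt{c^{-1}\Lambda(\boldsymbol{\theta}_r)}}\right),$$ where $\Phi$ is the standard normal CDF (with $\Phi(\infty)=1$, $\Phi(-\infty)=0$). Then, with $\operatorname{logit}(x)=\log(x)-\log(1-x)$, $$\lim_{c\to\infty}\frac{d}{dc}\operatorname{logit}\!\left(\tau^{(c)}_r\right)=\bigl(0.5-\mathbb{I}\{\delta_r\notin(\delta_L,\delta_U)\}\bigr)\times\min\left\{\frac{(\delta_U-\delta_r)^2}{\Lambda(\boldsymbol{\theta}_r)},\ \frac{(\delta_L-\delta_r)^2}{\Lambda(\boldsymbol{\theta}_r)}\r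ight\}.$$
   Context: Setting: clustered data from $c$ independent clusters, cluster $j$ having $n_j$ observations; the data consist of outcomes, binary treatment assignments $A\in\{0,1\}$, covariates $\mathbf{X}$, and unobserved cluster-level random effects $\mathbf{W}$ (not shared across clusters), modelled by a parametric model with parameter $\boldsymbol{\theta}$. The marginal estimand is $\delta(\boldsymbol{\theta})=\mu(\boldsymbol{\theta};1)-\mu(\boldsymbol{\theta};0)$, where $\mu(\boldsymbol{\theta};A)=\int\!\!\int\mu(\boldsymbol{\theta};A,\mathbf{X},\mathbf{W})p(\mathbf{X})p(\mathbf{W})\,d\mathbf{W}\,d\mathbf{X}$ is the population mean for treatment group $A$ marginalized over covariates and random effects. Assumptions: clusters are i.i.d., the likelihood satisfies the standard regularity conditions for asymptotic normality of the maximum likelihood estimator, and the analysis prior is absolutely continuous with positive density in a neighbourhood of $\boldsymbol{\theta}_r$. Under these conditions the maximum likelihood estimator of $\delta$ based on $c$ clusters is approximately $\mathcal{N}(\delta_r,c^{-1}\Lambda(\boldsymbol{\theta}_r))$ and the posterior of $\delta(\boldsymbol{\theta})$ is approximately $\mathcal{N}(\hat\delta^{(c)}_r,c^{-1}\Lambda(\boldsymbol{\theta}_r))$, where $\Lambda(\boldsymbol{\theta}_r)>0$ is the asymptotic variance (per cluster) of the estimator of $\delta$, determined by the Fisher information. The quantity $\tau^{(c)}_r$ is a proxy for the posterior probability of the hypothesis $H_1:\delta(\boldsymbol{\theta})\in(\delta_L,\delta_U)$. $\mathbb{I}\{\cdot\}$ denotes the indicator function. *)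

From Stdlib Require Import Reals.
From Coquelicot Require Import Coquelicot.
Open Scope R_scope.

Definition std_normal_pdf (t : R) : R := exp (- t ^ 2 / 2) / sqrt (2 * PI).

Definition Phi (x : R) : R :=
  RInt_gen std_normal_pdf (Rbar_locally m_infty) (at_point x).

Definition PhiBar (x : Rbar) : R :=
  match x with
  | Finite r => Phi r
  | p_infty => 1
  | m_infty => 0
  end.

Definition std_arg (d : Rbar) (m s : R) : Rbar :=
  match d with
  | Finite x => Finite ((x - m) / s)
  | p_infty => p_infty
  | m_infty => m_infty
  end.

Definition logit (x : R) : R := ln x - ln (1 - x).

(* hat delta^(c)_r, where z = Phi^{-1}(u_r) *)
Definition delta_hat (delta_r Lambda z c : R) : R :=
  delta_r + z * sqrt (Lambda / c).

Definition tau (delta_r Lambda z : R) (dL dU : Rbar) (c : R) : R :=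
  PhiBar (std_arg dU (delta_hat delta_r Lambda z c) (sqrt (/ c * Lambda)))
  - PhiBar (std_arg dL (delta_hat delta_r Lambda z c) (sqrt (/ c * Lambda))).

Definition ind_notin (dL dU : Rbar) (r : R) : R :=
  if Rbar_lt_dec dL (Finite r) then
    if Rbar_lt_dec (Finite r) dU then 0 else 1
  else 1.

Definition sq_scaled (d : Rbar) (r Lambda : R) : Rbar :=
  match d with
  | Finite x => Finite ((x - r) ^ 2 / Lambda)
  | _ => p_infty
  end.

(** Put c = t^2 and let a = (δ_U - δ_r)/√Λ, b = (δ_L - δ_r)/√Λ be the standardized
    endpoints; then T(t) := τ(t^2) = Φ(a t - z) - Φ(b t - z), and d/dc logit τ is
    T'(t) / (2 t T(t) (1 - T(t))).  Everything is governed by the Mills-ratio bounds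
    x φ(x)/(1 + x^2) <= 1 - Φ(x) <= φ(x)/x: the hazard φ(α t + β) / (t (1 - Φ(α t + β)))
    tends to α, and of two normal tails the one with the larger slope is negligible.
    If b < 0 < a, then 1 - T is the sum of two tails and the derivative tends to
    min(a^2, b^2)/2; otherwise T itself is a difference of two tails (or tends to a constant
    in (0, 1) when an endpoint equals δ_r) and the limit is -min(a^2, b^2)/2.  An infinite
    endpoint contributes no tail.  That Φ(+oo) = 1 is the Gaussian integral. *)

From Stdlib Require Import Reals Lra Psatz.
From Coquelicot Require Import Coquelicot.
From mathcomp Require all_boot all_order all_algebra.
From mathcomp Require all_classical all_reals all_analysis.
From mathcomp Require Rstruct Rstruct_topology gauss_integral.

Module GaussIntegral.
From mathcomp Require Import all_boot all_order all_algebra.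
From mathcomp Require Import all_classical all_reals all_analysis.
From mathcomp Require Import Rstruct Rstruct_topology gauss_integral.
Import Order.TTheory GRing.Theory Num.Theory.
Import numFieldNormedType.Exports.
Import gauss_integral_proof.
Local Open Scope classical_set_scope.
Local Open Scope ring_scope.

Lemma is_derive_derivable_pt_lim {f : R^o -> R^o} {x l : R} :
  derivable_pt_lim f x l -> is_derive (x : R^o) (1 : R^o) f (l : R^o).
Proof.
move=> fl.
have cvg_quot : (fun h : R^o => h^-1 *: ((f \o shift (x : R^o)) (h *: (1 : R^o)) - f x))
    @ (0 : R^o)^' --> (l : R^o).
  apply/cvgrPdist_lt => e e0.
  have [d Hd] := fl e (elimT RltP e0).
  exists (pos d) => /=; first by apply/RltP; case: d {Hd}.
  move=> t /= Ht tn0.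
  rewrite sub0r normrN -RabsE in Ht.
  move: (Hd t (elimN eqP tn0) (elimT RltP Ht)) => /RltP; rewrite RabsE distrC.
  have -> : (t%:A : R^o) = t by rewrite -[t%:A]/(t * 1) mulr1.
  by rewrite [t + x]addrC -[t^-1 *: _]/(t^-1 * _) mulrC.
apply: DeriveDef; first by apply/cvg_ex; exists l.
exact: cvg_lim.
Qed.

Lemma pi_PI : pi = PI :> R.
Proof.
pose g := (fun x : R => atan x - Ratan.atan x) : R^o -> R^o.
have Dg (x : R) : is_derive (x : R^o) (1 : R^o) g 0.
  have h1 : is_derive (x : R^o) (1 : R^o) (@atan R : R^o -> R^o) ((1 + x ^+ 2)^-1).
    by apply: DeriveDef; [exact: derivable_atan | rewrite -derive1E derive1_atan].
  have := is_deriveB h1 (is_derive_derivable_pt_lim (Ratan.derivable_pt_lim_atan x)).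
  by rewrite RinvE RpowE subrr.
have [c _] := @MVT R g (fun _ => 0) 0 1 ltr01 (fun x _ => Dg x)
  (derivable_within_continuous (fun x _ => @ex_derive _ _ _ _ _ _ _ (Dg x))).
rewrite mul0r /g atan0 Ratan.atan_0 subrr subr0 => /eqP; rewrite subr_eq0 => /eqP.
rewrite atan1 Ratan.atan_1 RdivE IZRposE INRE.
move/(congr1 (fun t => t * 4%:R)).
by rewrite !divfK // pnatr_eq0.
Qed.

Section GaussAntiderivative.
Variable F : R -> R.
Hypothesis F_gauss : forall x, derivable_pt_lim F x (exp (- (x * x))).

Let is_derive_F (x : R) : is_derive (x : R^o) (1 : R^o) (F : R^o -> R^o) (gauss_fun x : R^o).
Proof.
by have := is_derive_derivable_pt_lim (F_gauss x); rewrite RexpE /gauss_fun expr2.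
Qed.

Lemma integral0_gauss_FTC (y : R) : 0 < y -> integral0_gauss y = F y - F 0.
Proof.
move=> y0.
have cF (x : R) : {for (x : R^o), continuous (F : R^o -> R^o)}.
  apply: differentiable_continuous; apply/derivable1_diffP.
  exact: (@ex_derive _ _ _ _ _ _ _ (is_derive_F x)).
rewrite /integral0_gauss /Rintegral (@continuous_FTC2 _ gauss_fun F 0 y y0) //.
- by apply: continuous_subspaceT; exact: continuous_gauss_fun.
- split; first by move=> z _; exact: (@ex_derive _ _ _ _ _ _ _ (is_derive_F z)).
  + exact: cvg_at_right_filter (cF 0).
  + exact: cvg_at_left_filter (cF y).
- by move=> z _; rewrite derive1E; exact: (@derive_val _ _ _ _ _ _ _ (is_derive_F z)).
Qed.

Lemma cvg_gauss_antiderivative : (fun y => F y - F 0) @ +oo --> Num.sqrt pi / 2.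
Proof.
have cvg_Ig : @integral0_gauss R x @[x --> +oo] --> Num.sqrt pi / 2.
  have : Num.sqrt (@integral0_gauss R x ^+ 2) @[x --> +oo] --> Num.sqrt (pi / 4).
    by apply: continuous_cvg; [exact: sqrt_continuous | exact: cvg_integral0_gauss_sqr].
  rewrite sqrtrM ?pi_ge0// sqrtrV// (_ : 4 = 2 ^+ 2); last by rewrite expr2 -natrM.
  rewrite sqrtr_sqr ger0_norm// (_ : (fun _ => Num.sqrt _) = integral0_gauss)//.
  by apply/funext => r; rewrite sqrtr_sqr// ger0_norm//; exact: integral0_gauss_ge0.
apply: cvg_trans cvg_Ig; apply: near_eq_cvg.
near=> x; rewrite integral0_gauss_FTC //.
Unshelve. end_near.
Qed.

Lemma gauss_antiderivative_near :
  forall eps : R, Rlt 0 eps -> exists M : R, forall y : R, Rlt M y ->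
    Rlt (Rabs (F y - F 0 - sqrt PI / 2)%coqR) eps.
Proof.
move=> eps /RltP e0.
have := cvg_gauss_antiderivative; rewrite pi_PI => cvgF.
have [M [_ HM]] := proj1 (@cvgrPdist_lt _ R^o _ _ _ (fun y => F y - F 0) _) cvgF eps e0.
exists M => y /RltP My.
by apply/RltP; rewrite RabsE RsqrtE RdivE distrC; exact: HM.
Qed.

End GaussAntiderivative.

End GaussIntegral.

Open Scope R_scope.

Local Notation phi := std_normal_pdf.

Lemma is_lim_mult' (f g : R -> R) (x : Rbar) (lf lg : R) :
  is_lim f x lf -> is_lim g x lg -> is_lim (fun y => f y * g y) x (lf * lg).
Proof. intros Hf Hg. exact (is_lim_mult f g x lf lg Hf Hg I). Qed.

Lemma is_lim_scal_l' (f : R -> R) (x : Rbar) (a l : R) :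
  is_lim f x l -> is_lim (fun y => a * f y) x (a * l).
Proof. apply is_lim_scal_l. Qed.

Lemma is_lim_inv' (f : R -> R) (x : Rbar) (l : R) :
  is_lim f x l -> l <> 0 -> is_lim (fun y => / f y) x (/ l).
Proof. intros Hf Hl. apply (is_lim_inv f x l Hf). congruence. Qed.

Lemma is_lim_div' (f g : R -> R) (x : Rbar) (lf lg : R) :
  is_lim f x lf -> is_lim g x lg -> lg <> 0 -> is_lim (fun y => f y / g y) x (lf / lg).
Proof. intros Hf Hg Hlg. apply is_lim_mult'; [|apply is_lim_inv']; assumption. Qed.

Lemma is_lim_inv_p : is_lim (fun t => / t) p_infty 0.
Proof. exact (is_lim_inv _ _ _ (is_lim_id p_infty) ltac:(discriminate)). Qed.

Lemma is_lim_lin_p (a b : R) : 0 < a -> is_lim (fun t => a * t + b) p_infty p_infty.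
Proof.
  intros Ha. apply is_lim_spec. intros M. exists ((M - b) / a). intros t Ht.
  apply Rmult_lt_compat_l with (r := a) in Ht; auto.
  replace (a * ((M - b) / a)) with (M - b) in Ht by (field; lra). simpl; lra.
Qed.

Lemma is_lim_lin_m (a b : R) : a < 0 -> is_lim (fun t => a * t + b) p_infty m_infty.
Proof.
  intros Ha. apply is_lim_spec. intros M. exists ((M - b) / a). intros t Ht.
  apply Rmult_lt_compat_l with (r := - a) in Ht; [|lra].
  replace (- a * ((M - b) / a)) with (b - M) in Ht by (field; lra). simpl; lra.
Qed.

Lemma is_lim_comp_lin_p (f : R -> R) (a b : R) (l : Rbar) :
  0 < a -> is_lim f p_infty l -> is_lim (fun t => f (a * t + b)) p_infty l.
Proof.
  intros Ha Hf. apply (is_lim_comp f _ p_infty l p_infty Hf (is_lim_lin_p a b Ha)).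
  exists 0. discriminate.
Qed.

Lemma is_lim_lin_div_p (a b : R) : is_lim (fun t => (a * t + b) / t) p_infty a.
Proof.
  apply (is_lim_ext_loc (fun t => a + b * / t)).
  { exists 0. intros t Ht. field. lra. }
  replace (Finite a) with (Finite (a + b * 0)) by (f_equal; ring).
  apply is_lim_plus', is_lim_mult'; [apply is_lim_const | apply is_lim_const | apply is_lim_inv_p].
Qed.

Lemma eventually_lin_pos (a b : R) : 0 < a ->
  Rbar_locally' p_infty (fun t => 0 < t /\ 0 < a * t + b).
Proof.
  intros Ha. destruct (proj2 (is_lim_spec _ _ _) (is_lim_lin_p a b Ha) 0) as [M HM].
  exists (Rmax 0 M). intros t Ht. split.
  - eapply Rle_lt_trans; [apply Rmax_l | exact Ht].
  - apply HM. eapply Rle_lt_trans; [apply Rmax_r | exact Ht].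
Qed.

Lemma is_lim_gauss_antiderivative (F : R -> R) :
  (forall x, derivable_pt_lim F x (exp (- (x * x)))) ->
  is_lim (fun y => F y - F 0) p_infty (sqrt PI / 2).
Proof.
  intros F_gauss. apply is_lim_spec. intros eps.
  exact (GaussIntegral.gauss_antiderivative_near F F_gauss eps (cond_pos eps)).
Qed.

Lemma sqrt_2PI_pos : 0 < sqrt (2 * PI).
Proof. apply sqrt_lt_R0. generalize PI_RGT_0; lra. Qed.

Lemma std_normal_pdf_pos x : 0 < phi x.
Proof. apply Rdiv_lt_0_compat; [apply exp_pos | apply sqrt_2PI_pos]. Qed.

Lemma std_normal_pdf_opp x : phi (- x) = phi x.
Proof. unfold std_normal_pdf. do 3 f_equal. ring. Qed.

Lemma std_normal_pdf_lin_opp (a z t : R) : phi (- a * t - - z) = phi (a * t - z).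
Proof. rewrite <- std_normal_pdf_opp. f_equal. ring. Qed.

Lemma continuous_std_normal_pdf x : continuous phi x.
Proof.
  apply (@ex_derive_continuous R_AbsRing R_NormedModule).
  unfold std_normal_pdf. auto_derive. auto.
Qed.

Lemma is_lim_std_normal_pdf_p : is_lim phi p_infty 0.
Proof.
  apply (is_lim_ext_loc (fun x => exp (x * (- (1 / 2) * x + 0)) * / sqrt (2 * PI))).
  { exists 0. intros x _. unfold std_normal_pdf. unfold Rdiv. f_equal. f_equal. field. }
  replace (Finite 0) with (Finite (0 * / sqrt (2 * PI))) by (f_equal; ring).
  apply is_lim_mult'; [|apply is_lim_const].
  apply (is_lim_comp exp _ p_infty 0 m_infty is_lim_exp_m).
  - apply (is_lim_mult (fun x => x) _ p_infty p_infty m_infty); [apply is_lim_id| |exact I].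
    apply is_lim_lin_m; lra.
  - exists 0. discriminate.
Qed.

Lemma sqrt_PI_std_normal_pdf_sqrt2 x :
  sqrt PI * (sqrt 2 * phi (sqrt 2 * x)) = exp (- (x * x)).
Proof.
  assert (H2 : 0 < sqrt 2) by (apply sqrt_lt_R0; lra).
  assert (HPI : 0 < sqrt PI) by (apply sqrt_lt_R0, PI_RGT_0).
  unfold std_normal_pdf.
  replace ((sqrt 2 * x) ^ 2) with ((sqrt 2 * sqrt 2) * (x * x)) by ring.
  rewrite sqrt_sqrt, sqrt_mult by (generalize PI_RGT_0; lra).
  replace (- (2 * (x * x)) / 2) with (- (x * x)) by field.
  field. lra.
Qed.

Definition Phi_centered (x : R) : R := RInt phi 0 x.

Lemma ex_RInt_std_normal_pdf a b : ex_RInt phi a b.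
Proof.
  apply (ex_RInt_continuous (V := R_CompleteNormedModule)).
  intros; apply continuous_std_normal_pdf.
Qed.

Lemma is_derive_Phi_centered x : is_derive Phi_centered x (phi x).
Proof.
  apply is_derive_RInt with 0; [|apply continuous_std_normal_pdf].
  apply filter_forall. intros b. apply (RInt_correct (V := R_CompleteNormedModule)).
  apply ex_RInt_std_normal_pdf.
Qed.

Lemma Phi_centered_opp x : Phi_centered (- x) = - Phi_centered x.
Proof.
  unfold Phi_centered.
  assert (H := RInt_comp_lin phi (-1) 0 0 x).
  replace (-1 * 0 + 0) with 0 in H by ring. replace (-1 * x + 0) with (- x) in H by ring.
  rewrite <- H by apply ex_RInt_std_normal_pdf.
  rewrite <- (RInt_opp (V := R_CompleteNormedModule)) by apply ex_RInt_std_normal_pdf.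
  apply RInt_ext. intros y _. unfold scal; simpl; unfold mult, opp; simpl.
  replace (-1 * y + 0) with (- y) by ring. rewrite std_normal_pdf_opp. ring.
Qed.

Lemma is_lim_Phi_centered_p : is_lim Phi_centered p_infty (1 / 2).
Proof.
  assert (H2 : 0 < sqrt 2) by (apply sqrt_lt_R0; lra).
  assert (HPI : 0 < sqrt PI) by (apply sqrt_lt_R0, PI_RGT_0).
  set (F := fun u => sqrt PI * Phi_centered (sqrt 2 * u)).
  assert (HF : is_lim (fun y => F y - F 0) p_infty (sqrt PI / 2)).
  { apply is_lim_gauss_antiderivative. intros x. apply is_derive_Reals.
    rewrite <- sqrt_PI_std_normal_pdf_sqrt2. unfold F.
    apply (is_derive_scal (fun u => Phi_centered (sqrt 2 * u))).
    apply (is_derive_comp Phi_centered (fun u => sqrt 2 * u)).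
    - apply is_derive_Phi_centered.
    - auto_derive; auto. ring. }
  apply (is_lim_ext (fun x => / sqrt PI * (F (/ sqrt 2 * x + 0) - F 0))).
  - intros x. unfold F. replace (sqrt 2 * (/ sqrt 2 * x + 0)) with x by (field; lra).
    rewrite Rmult_0_r. unfold Phi_centered at 2. rewrite RInt_point.
    unfold zero; simpl. field. lra.
  - replace (Finite (1 / 2)) with (Finite (/ sqrt PI * (sqrt PI / 2))) by (f_equal; field; lra).
    apply is_lim_scal_l', (is_lim_comp_lin_p (fun y => F y - F 0)); [|exact HF].
    apply Rinv_0_lt_compat; lra.
Qed.

Lemma is_lim_Phi_centered_m : is_lim Phi_centered m_infty (- (1 / 2)).
Proof.
  apply (is_lim_ext (fun x => - Phi_centered (- x))).
  { intros x. rewrite Phi_centered_opp. ring. }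
  apply (is_lim_opp _ _ (Finite (1 / 2))).
  apply (is_lim_comp _ _ _ _ p_infty is_lim_Phi_centered_p).
  - apply (is_lim_opp _ m_infty m_infty), is_lim_id.
  - exists 0. discriminate.
Qed.

Lemma Phi_Phi_centered x : Phi x = Phi_centered x + 1 / 2.
Proof.
  assert (Derive_Phi_centered : forall t, Derive Phi_centered t = phi t).
  { intros t. apply is_derive_unique, is_derive_Phi_centered. }
  assert (H : is_RInt_gen (Derive Phi_centered) (Rbar_locally m_infty) (at_point x)
                (Phi_centered x - - (1 / 2))).
  { apply is_RInt_gen_Derive.
    - apply filter_forall. intros ab y _. eexists; apply is_derive_Phi_centered.
    - apply filter_forall. intros ab y _.
      apply (continuous_ext phi); [easy | apply continuous_std_normal_pdf].
    - exact is_lim_Phi_centered_m.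
    - intros P HP. exact (locally_singleton _ _ HP). }
  apply (is_RInt_gen_ext _ phi) in H.
  - unfold Phi. rewrite (is_RInt_gen_unique _ _ H). lra.
  - apply filter_forall. intros ab y _. apply Derive_Phi_centered.
Qed.

Lemma is_derive_Phi x : is_derive Phi x (phi x).
Proof.
  apply (is_derive_ext (fun t => Phi_centered t + 1 / 2)).
  { intros t. symmetry. apply Phi_Phi_centered. }
  auto_derive.
  - eexists; apply is_derive_Phi_centered.
  - rewrite Rmult_1_l. apply is_derive_unique, is_derive_Phi_centered.
Qed.

Lemma ex_derive_Phi x : ex_derive Phi x.
Proof. eexists; apply is_derive_Phi. Qed.

Lemma Derive_Phi x : Derive Phi x = phi x.
Proof. apply is_derive_unique, is_derive_Phi. Qed.

Lemma is_derive_Phi_lin (a z t : R) : is_derive (fun t => Phi (a * t - z)) t (a * phi (a * t - z)).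
Proof.
  auto_derive; [apply ex_derive_Phi|]. rewrite Derive_Phi. now rewrite Rmult_1_r.
Qed.

Lemma is_lim_Phi_p : is_lim Phi p_infty 1.
Proof.
  apply (is_lim_ext (fun t => Phi_centered t + 1 / 2)).
  { intros t. symmetry. apply Phi_Phi_centered. }
  replace (Finite 1) with (Finite (1 / 2 + 1 / 2)) by (f_equal; field).
  apply is_lim_plus'; [apply is_lim_Phi_centered_p | apply is_lim_const].
Qed.

Lemma Phi_opp x : Phi (- x) = 1 - Phi x.
Proof. rewrite !Phi_Phi_centered, Phi_centered_opp. field. Qed.

Lemma Phi_lin_opp (a z t : R) : Phi (- a * t - - z) = 1 - Phi (a * t - z).
Proof. rewrite <- Phi_opp. f_equal. ring. Qed.

Lemma Phi_increasing x y : x < y -> Phi x < Phi y.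
Proof.
  intros Hxy. apply (incr_function Phi m_infty p_infty phi); simpl; auto.
  - intros; apply is_derive_Phi.
  - intros; apply std_normal_pdf_pos.
Qed.

Lemma Phi_lt_1 x : Phi x < 1.
Proof.
  apply Rlt_le_trans with (Phi (x + 1)); [apply Phi_increasing; lra|].
  apply (is_lim_le_loc (fun _ => Phi (x + 1)) Phi p_infty (Phi (x + 1)) 1).
  - exists (x + 1). intros y Hy. left. apply Phi_increasing, Hy.
  - apply is_lim_const.
  - apply is_lim_Phi_p.
Qed.

Lemma Phi_pos x : 0 < Phi x.
Proof. rewrite <- (Ropp_involutive x), Phi_opp. generalize (Phi_lt_1 (- x)); lra. Qed.

Definition Q (x : R) : R := 1 - Phi x.

Lemma Q_pos x : 0 < Q x.
Proof. unfold Q. generalize (Phi_lt_1 x); lra. Qed.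

Lemma is_lim_Q_p : is_lim Q p_infty 0.
Proof.
  replace (Finite 0) with (Finite (1 - 1)) by (f_equal; ring).
  apply is_lim_minus'; [apply is_lim_const | apply is_lim_Phi_p].
Qed.

Lemma Phi_lin_Q (a z t : R) : Phi (a * t - z) = Q (- a * t + z).
Proof. unfold Q. rewrite <- Phi_opp. f_equal. ring. Qed.

Lemma is_lim_Q_lin (a z : R) : 0 < a -> is_lim (fun t => Q (a * t + z)) p_infty 0.
Proof. intros Ha. apply is_lim_comp_lin_p, is_lim_Q_p. exact Ha. Qed.

Lemma nonneg_of_decreasing_is_lim_0 (g dg : R -> R) (x : R) : 0 < x ->
  (forall y, 0 < y -> is_derive g y (dg y)) -> (forall y, 0 < y -> dg y < 0) ->
  is_lim g p_infty 0 -> 0 <= g x.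
Proof.
  intros Hx Hd Hneg Hl.
  assert (Hdec : forall y, x < y -> g y < g x).
  { intros y Hy. apply Ropp_lt_cancel.
    apply (incr_function (fun t => - g t) 0 p_infty (fun t => - dg t)); simpl; auto.
    - intros t Ht _. apply (is_derive_opp g t (dg t)), Hd, Ht.
    - intros t Ht _. specialize (Hneg t Ht). lra. }
  apply (is_lim_le_loc g (fun _ => g x) p_infty 0 (g x)); [|exact Hl|apply is_lim_const].
  exists x. intros y Hy. left. apply Hdec, Hy.
Qed.

Lemma Q_le_mills x : 0 < x -> Q x <= phi x / x.
Proof.
  intros Hx.
  cut (0 <= phi x / x - Q x); [lra|].
  apply (nonneg_of_decreasing_is_lim_0 (fun y => phi y / y - Q y) (fun y => - (phi y / y ^ 2)));
    [exact Hx | | |].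
  - intros y Hy. unfold Q, std_normal_pdf. auto_derive.
    + repeat split; auto using ex_derive_Phi; lra.
    + rewrite Derive_Phi. unfold std_normal_pdf.
      replace (- (y * (y * 1)) * / 2) with (- y ^ 2 / 2) by (unfold Rdiv; ring).
      field. split; [apply Rgt_not_eq, sqrt_2PI_pos | lra].
  - intros y Hy. assert (0 < phi y / y ^ 2); [|lra].
    apply Rdiv_lt_0_compat; [apply std_normal_pdf_pos | apply pow_lt, Hy].
  - replace (Finite 0) with (Finite (0 * 0 - 0)) by (f_equal; ring).
    apply is_lim_minus', is_lim_Q_p.
    apply is_lim_mult'; [apply is_lim_std_normal_pdf_p | apply is_lim_inv_p].
Qed.

Lemma mills_le_Q x : 0 < x -> x * phi x / (1 + x ^ 2) <= Q x.
Proof.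
  intros Hx.
  cut (0 <= Q x - x * phi x / (1 + x ^ 2)); [lra|].
  apply (nonneg_of_decreasing_is_lim_0 (fun y => Q y - y * phi y / (1 + y ^ 2))
           (fun y => - (2 * phi y / (1 + y ^ 2) ^ 2))); [exact Hx | | |].
  - intros y Hy. unfold Q, std_normal_pdf. auto_derive.
    + repeat split; auto using ex_derive_Phi; nra.
    + rewrite Derive_Phi. unfold std_normal_pdf.
      replace (- (y * (y * 1)) * / 2) with (- y ^ 2 / 2) by (unfold Rdiv; ring).
      field. split; [apply Rgt_not_eq, sqrt_2PI_pos | nra].
  - intros y Hy. assert (0 < 2 * phi y / (1 + y ^ 2) ^ 2); [|lra].
    apply Rdiv_lt_0_compat; [generalize (std_normal_pdf_pos y); lra | apply pow_lt; nra].
  - replace (Finite 0) with (Finite (0 - 0)) by (f_equal; ring).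
    apply is_lim_minus'; [apply is_lim_Q_p|].
    apply (is_lim_le_le_loc (fun _ => 0) (fun y => phi y * / y)).
    + exists 0. intros y Hy. assert (Hp := std_normal_pdf_pos y). split.
      * apply Rdiv_le_0_compat; nra.
      * apply Rmult_le_reg_r with (y * (1 + y ^ 2)); [nra|].
        replace (y * phi y / (1 + y ^ 2) * (y * (1 + y ^ 2))) with (y * y * phi y)
          by (field; nra).
        replace (phi y * / y * (y * (1 + y ^ 2))) with ((1 + y ^ 2) * phi y) by (field; lra).
        nra.
    + apply is_lim_const.
    + replace (Finite 0) with (Finite (0 * 0)) by (f_equal; ring).
      apply is_lim_mult'; [apply is_lim_std_normal_pdf_p | apply is_lim_inv_p].
Qed.

Lemma hazard_bounds x : 0 < x -> x <= phi x / Q x <= x + / x.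
Proof.
  intros Hx. assert (Hq := Q_pos x). assert (Hp := std_normal_pdf_pos x).
  assert (Hu := Q_le_mills x Hx). assert (Hl := mills_le_Q x Hx).
  split.
  - apply Rmult_le_reg_r with (Q x); [exact Hq|].
    replace (phi x / Q x * Q x) with (phi x) by (field; lra).
    apply Rmult_le_reg_r with (/ x); [apply Rinv_0_lt_compat, Hx|].
    replace (x * Q x * / x) with (Q x) by (field; lra). exact Hu.
  - apply Rmult_le_reg_r with (Q x); [exact Hq|].
    replace (phi x / Q x * Q x) with (phi x) by (field; lra).
    apply Rmult_le_reg_r with (x / (1 + x ^ 2)); [apply Rdiv_lt_0_compat; nra|].
    replace ((x + / x) * Q x * (x / (1 + x ^ 2))) with (Q x) by (field; nra).
    replace (phi x * (x / (1 + x ^ 2))) with (x * phi x / (1 + x ^ 2)) by (field; nra).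
    exact Hl.
Qed.

Lemma is_lim_hazard (a b : R) : 0 < a ->
  is_lim (fun t => phi (a * t + b) / (t * Q (a * t + b))) p_infty a.
Proof.
  intros Ha.
  apply (is_lim_le_le_loc (fun t => (a * t + b) / t)
           (fun t => (a * t + b) / t + / (a * t + b) * / t)).
  - eapply filter_imp; [|apply (eventually_lin_pos a b Ha)]. intros t [Ht Hx].
    set (x := a * t + b) in *. assert (Hq := Q_pos x).
    destruct (hazard_bounds x Hx) as [Hlo Hhi].
    replace (phi x / (t * Q x)) with (phi x / Q x * / t) by (field; lra).
    replace (x / t + / x * / t) with ((x + / x) * / t) by (field; lra).
    unfold Rdiv. assert (0 < / t) by (apply Rinv_0_lt_compat, Ht). split; nra.
  - apply is_lim_lin_div_p.
  - replace (Finite a) with (Finite (a + 0 * 0)) by (f_equal; ring).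
    apply is_lim_plus'; [apply is_lim_lin_div_p|].
    apply is_lim_mult'; [|apply is_lim_inv_p].
    apply (is_lim_inv _ _ p_infty); [apply is_lim_lin_p, Ha | discriminate].
Qed.

Lemma is_lim_std_normal_pdf_ratio (a b z1 z2 : R) : 0 < a < b ->
  is_lim (fun t => phi (b * t + z1) / phi (a * t + z2)) p_infty 0.
Proof.
  intros [Ha Hb].
  apply (is_lim_ext (fun t => exp (t * ((a ^ 2 - b ^ 2) / 2 * t + (a * z2 - b * z1))
                                  + (z2 ^ 2 - z1 ^ 2) / 2))).
  { intros t. unfold std_normal_pdf.
    replace (t * ((a ^ 2 - b ^ 2) / 2 * t + (a * z2 - b * z1)) + (z2 ^ 2 - z1 ^ 2) / 2)
      with (- (b * t + z1) ^ 2 / 2 + - (- (a * t + z2) ^ 2 / 2)) by field.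
    rewrite exp_plus, exp_Ropp. field.
    split; apply Rgt_not_eq; [apply sqrt_2PI_pos | apply exp_pos]. }
  apply (is_lim_comp exp _ p_infty 0 m_infty is_lim_exp_m).
  - apply (is_lim_plus _ _ _ m_infty (Finite ((z2 ^ 2 - z1 ^ 2) / 2)) m_infty);
      [|apply is_lim_const|reflexivity].
    apply (is_lim_mult (fun t => t) _ p_infty p_infty m_infty); [apply is_lim_id| |exact I].
    apply is_lim_lin_m. nra.
  - exists 0. discriminate.
Qed.

Lemma is_lim_Q_ratio (a b z1 z2 : R) : 0 < a < b ->
  is_lim (fun t => Q (b * t + z1) / Q (a * t + z2)) p_infty 0.
Proof.
  intros [Ha Hb].
  (* a ratio of tails is a ratio of densities times the inverse ratio of hazards *)
  apply (is_lim_ext_loc (fun t => phi (b * t + z1) / phi (a * t + z2) *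
            ((phi (a * t + z2) / (t * Q (a * t + z2)))
             / (phi (b * t + z1) / (t * Q (b * t + z1)))))).
  { exists 0. intros t Ht.
    assert (H1 := Q_pos (b * t + z1)). assert (H2 := Q_pos (a * t + z2)).
    assert (H3 := std_normal_pdf_pos (b * t + z1)). assert (H4 := std_normal_pdf_pos (a * t + z2)).
    field. repeat split; lra. }
  replace (Finite 0) with (Finite (0 * (a / b))) by (f_equal; ring).
  apply is_lim_mult'; [apply is_lim_std_normal_pdf_ratio; lra|].
  apply is_lim_div'; [apply is_lim_hazard, Ha | apply is_lim_hazard; lra | lra].
Qed.

Lemma is_lim_convex_comb (u1 u2 w : R -> R) (A B : R) :
  is_lim u1 p_infty A -> is_lim u2 p_infty B ->
  Rbar_locally' p_infty (fun t => 0 <= w t <= 1) ->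
  A = B \/ is_lim w p_infty 0 ->
  is_lim (fun t => (1 - w t) * u1 t + w t * u2 t) p_infty A.
Proof.
  intros H1 H2 Hw [<- | Hw0].
  - assert (Habs : forall u, is_lim u p_infty A -> is_lim (fun t => Rabs (u t - A)) p_infty 0).
    { intros u Hu. rewrite <- Rabs_R0. replace 0 with (A - A) at 1 by ring.
      apply (is_lim_Rabs (fun t => u t - A) p_infty (A - A)).
      apply is_lim_minus'; [exact Hu | apply is_lim_const]. }
    set (e := fun t => Rabs (u1 t - A) + Rabs (u2 t - A)).
    assert (He : is_lim e p_infty 0).
    { replace (Finite 0) with (Finite (0 + 0)) by (f_equal; ring).
      apply is_lim_plus'; apply Habs; assumption. }
    apply (is_lim_le_le_loc (fun t => A - e t) (fun t => A + e t)).
    + eapply filter_imp; [|exact Hw]. intros t Hwt. unfold e.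
      assert (Hd : forall d, - Rabs d <= d <= Rabs d).
      { intros d. generalize (Rle_abs d) (Rle_abs (- d)). rewrite Rabs_Ropp. lra. }
      destruct (Hd (u1 t - A)), (Hd (u2 t - A)). split; nra.
    + replace (Finite A) with (Finite (A - 0)) by (f_equal; ring).
      apply is_lim_minus'; [apply is_lim_const | exact He].
    + replace (Finite A) with (Finite (A + 0)) by (f_equal; ring).
      apply is_lim_plus'; [apply is_lim_const | exact He].
  - replace (Finite A) with (Finite ((1 - 0) * A + 0 * B)) by (f_equal; ring).
    apply is_lim_plus'; apply is_lim_mult'; try assumption.
    apply is_lim_minus'; [apply is_lim_const | exact Hw0].
Qed.

Lemma is_lim_hazard_sum (a b z1 z2 : R) : 0 < a <= b ->
  is_lim (fun t => (a * phi (a * t + z1) + b * phi (b * t + z2))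
                   / (t * (Q (a * t + z1) + Q (b * t + z2)))) p_infty (a ^ 2).
Proof.
  intros [Ha Hab].
  set (Q1 := fun t => Q (a * t + z1)). set (Q2 := fun t => Q (b * t + z2)).
  set (w := fun t => Q2 t / (Q1 t + Q2 t)).
  assert (HQ : forall t, 0 < Q1 t /\ 0 < Q2 t) by (intros; split; apply Q_pos).
  apply (is_lim_ext_loc (fun t => (1 - w t) * (a * (phi (a * t + z1) / (t * Q1 t)))
                                  + w t * (b * (phi (b * t + z2) / (t * Q2 t))))).
  { exists 0. intros t Ht. unfold w. destruct (HQ t). unfold Q1, Q2 in *.
    field. repeat split; lra. }
  apply is_lim_convex_comb with (b ^ 2).
  - replace (a ^ 2) with (a * a) by ring. apply is_lim_scal_l', is_lim_hazard, Ha.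
  - replace (b ^ 2) with (b * b) by ring. apply is_lim_scal_l', is_lim_hazard; lra.
  - exists 0. intros t _. unfold w. destruct (HQ t). split.
    + apply Rdiv_le_0_compat; lra.
    + apply Rmult_le_reg_r with (Q1 t + Q2 t); [lra|].
      replace (Q2 t / (Q1 t + Q2 t) * (Q1 t + Q2 t)) with (Q2 t) by (field; lra). lra.
  - destruct (Req_dec a b) as [<- | Hne]; [left; reflexivity | right].
    apply (is_lim_le_le_loc (fun _ => 0) (fun t => Q2 t / Q1 t)).
    + exists 0. intros t _. unfold w. destruct (HQ t). split.
      * apply Rdiv_le_0_compat; lra.
      * apply Rmult_le_reg_r with ((Q1 t + Q2 t) * Q1 t); [nra|].
        replace (Q2 t / (Q1 t + Q2 t) * ((Q1 t + Q2 t) * Q1 t)) with (Q2 t * Q1 t)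
          by (field; lra).
        replace (Q2 t / Q1 t * ((Q1 t + Q2 t) * Q1 t)) with (Q2 t * (Q1 t + Q2 t))
          by (field; lra).
        nra.
    + apply is_lim_const.
    + apply is_lim_Q_ratio; lra.
Qed.

Lemma is_lim_hazard_diff (a b z1 z2 : R) : 0 < a < b ->
  is_lim (fun t => (- a * phi (a * t + z1) + b * phi (b * t + z2))
                   / (t * (Q (a * t + z1) - Q (b * t + z2)))) p_infty (- a ^ 2).
Proof.
  intros [Ha Hab].
  set (x1 := fun t => a * t + z1). set (x2 := fun t => b * t + z2).
  set (h1 := fun t => phi (x1 t) / (t * Q (x1 t))).
  apply (is_lim_ext_loc (fun t => (- a * h1 t + b * (phi (x2 t) / phi (x1 t)) * h1 t)
                                  / (1 - Q (x2 t) / Q (x1 t)))).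
  { eapply filter_imp; [|apply (eventually_lin_pos (b - a) (z2 - z1)); lra].
    intros t [Ht Hx]. unfold h1.
    assert (Hq1 := Q_pos (x1 t)). assert (Hp1 := std_normal_pdf_pos (x1 t)).
    assert (Hlt : Q (x2 t) < Q (x1 t)).
    { unfold Q. apply Rplus_lt_compat_l, Ropp_lt_contravar, Phi_increasing.
      unfold x1, x2. lra. }
    unfold x1, x2 in *. field. repeat split; lra. }
  replace (Finite (- a ^ 2)) with (Finite ((- a * a + b * 0 * a) / (1 - 0)))
    by (f_equal; field).
  assert (Hh1 : is_lim h1 p_infty a) by apply is_lim_hazard, Ha.
  apply is_lim_div'; [| |lra].
  - apply is_lim_plus'; [apply is_lim_scal_l', Hh1|].
    apply is_lim_mult'; [apply is_lim_scal_l', is_lim_std_normal_pdf_ratio; lra | exact Hh1].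
  - apply is_lim_minus'; [apply is_lim_const | apply is_lim_Q_ratio; lra].
Qed.

Definition logit_sqrt_rate (T dT : R -> R) (t : R) : R := dT t / (2 * t * (T t * (1 - T t))).

Lemma logit_sqrt_rate_compl (T dT : R -> R) (t : R) :
  logit_sqrt_rate (fun s => 1 - T s) (fun s => - dT s) t = - logit_sqrt_rate T dT t.
Proof.
  unfold logit_sqrt_rate. replace ((1 - T t) * (1 - (1 - T t))) with (T t * (1 - T t)) by ring.
  unfold Rdiv. ring.
Qed.

Lemma is_lim_logit_sqrt_rate_Phi_pos (a z : R) : 0 < a ->
  is_lim (logit_sqrt_rate (fun t => Phi (a * t - z)) (fun t => a * phi (a * t - z)))
    p_infty (a ^ 2 / 2).
Proof.
  intros Ha.
  apply (is_lim_ext_loc (fun t => a / 2 * (phi (a * t + - z) / (t * Q (a * t + - z)))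
                                  * / Phi (a * t + - z))).
  { exists 0. intros t Ht. unfold logit_sqrt_rate, Q.
    replace (a * t + - z) with (a * t - z) by ring.
    assert (H1 := Phi_pos (a * t - z)). assert (H2 := Phi_lt_1 (a * t - z)).
    field. repeat split; lra. }
  replace (a ^ 2 / 2) with (a / 2 * a * / 1) by field.
  apply is_lim_mult'; [apply is_lim_scal_l', is_lim_hazard, Ha|].
  apply is_lim_inv'; [apply is_lim_comp_lin_p, is_lim_Phi_p; exact Ha | lra].
Qed.

Lemma is_lim_logit_sqrt_rate_Phi (a z : R) :
  is_lim (logit_sqrt_rate (fun t => Phi (a * t - z)) (fun t => a * phi (a * t - z)))
    p_infty ((1 / 2 - ind_notin m_infty (Finite a) 0) * a ^ 2).
Proof.
  unfold ind_notin. destruct (Rbar_lt_dec m_infty (Finite 0)) as [_|H]; [|now elim H].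
  destruct (Rbar_lt_dec (Finite 0) (Finite a)) as [Ha|Ha]; simpl in Ha.
  - replace ((1 / 2 - 0) * a ^ 2) with (a ^ 2 / 2) by field.
    apply is_lim_logit_sqrt_rate_Phi_pos, Ha.
  - destruct (Req_dec a 0) as [-> | Ha0].
    + apply (is_lim_ext (fun _ => 0)); [intros t; unfold logit_sqrt_rate, Rdiv; ring|].
      replace ((1 / 2 - 1) * 0 ^ 2) with 0 by ring. apply is_lim_const.
    + apply (is_lim_ext (fun t => - logit_sqrt_rate (fun t => Phi (- a * t - - z))
                                     (fun t => - a * phi (- a * t - - z)) t)).
      { intros t. rewrite <- logit_sqrt_rate_compl. unfold logit_sqrt_rate.
        rewrite Phi_lin_opp, std_normal_pdf_lin_opp. f_equal; ring. }
      replace ((1 / 2 - 1) * a ^ 2) with (- ((- a) ^ 2 / 2)) by field.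
      apply (is_lim_opp _ _ (Finite _)), is_lim_logit_sqrt_rate_Phi_pos. lra.
Qed.

Definition band_prob (a b z t : R) : R := Phi (a * t - z) - Phi (b * t - z).

Definition band_prob_deriv (a b z t : R) : R := a * phi (a * t - z) - b * phi (b * t - z).

Lemma band_prob_reflect (a b z t : R) : band_prob (- b) (- a) (- z) t = band_prob a b z t.
Proof. unfold band_prob. rewrite !Phi_lin_opp. ring. Qed.

Lemma band_prob_deriv_reflect (a b z t : R) :
  band_prob_deriv (- b) (- a) (- z) t = band_prob_deriv a b z t.
Proof. unfold band_prob_deriv. rewrite !std_normal_pdf_lin_opp. ring. Qed.

Lemma band_prob_bounds (a b z t : R) : b < a -> 0 < t -> 0 < band_prob a b z t < 1.
Proof.
  intros Hab Ht. unfold band_prob.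
  assert (Phi (b * t - z) < Phi (a * t - z)) by (apply Phi_increasing; nra).
  generalize (Phi_lt_1 (a * t - z)) (Phi_pos (b * t - z)). lra.
Qed.

Lemma is_derive_band_prob (a b z t : R) : is_derive (band_prob a b z) t (band_prob_deriv a b z t).
Proof. apply (is_derive_minus (fun t => Phi (a * t - z))); apply is_derive_Phi_lin. Qed.

Lemma is_lim_logit_sqrt_rate_band_inside (a b z : R) : b < 0 < a -> a <= - b ->
  is_lim (logit_sqrt_rate (band_prob a b z) (band_prob_deriv a b z)) p_infty (a ^ 2 / 2).
Proof.
  intros [Hb Ha] Hab.
  assert (HT : forall t, band_prob a b z t = 1 - (Q (a * t + - z) + Q (- b * t + z))).
  { intros t. unfold band_prob. rewrite (Phi_lin_Q b z t). unfold Q.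
    replace (a * t + - z) with (a * t - z) by ring. ring. }
  apply (is_lim_ext_loc (fun t =>
     (a * phi (a * t + - z) + - b * phi (- b * t + z)) / (t * (Q (a * t + - z) + Q (- b * t + z)))
     * / (2 * band_prob a b z t))).
  { exists 0. intros t Ht. assert (H01 := band_prob_bounds a b z t ltac:(lra) Ht).
    unfold logit_sqrt_rate, band_prob_deriv. rewrite HT in *.
    rewrite <- (std_normal_pdf_lin_opp b z t).
    replace (a * t + - z) with (a * t - z) in * by ring.
    replace (- b * t - - z) with (- b * t + z) by ring.
    generalize (Q_pos (a * t - z)) (Q_pos (- b * t + z)). intros.
    field. repeat split; lra. }
  replace (a ^ 2 / 2) with (a ^ 2 * / (2 * (1 - (0 + 0)))) by field.
  apply is_lim_mult'; [apply is_lim_hazard_sum; lra|].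
  apply is_lim_inv'; [|lra]. apply is_lim_scal_l'.
  apply (is_lim_ext (fun t => 1 - (Q (a * t + - z) + Q (- b * t + z))));
    [intros; symmetry; apply HT|].
  apply is_lim_minus'; [apply is_lim_const|].
  apply is_lim_plus'; apply is_lim_Q_lin; lra.
Qed.

Lemma is_lim_logit_sqrt_rate_band_below (a b z : R) : b < a < 0 ->
  is_lim (logit_sqrt_rate (band_prob a b z) (band_prob_deriv a b z)) p_infty (- (a ^ 2 / 2)).
Proof.
  intros [Hab Ha].
  assert (HT : forall t, band_prob a b z t = Q (- a * t + z) - Q (- b * t + z)).
  { intros t. unfold band_prob. rewrite !Phi_lin_Q. reflexivity. }
  apply (is_lim_ext_loc (fun t =>
     (- - a * phi (- a * t + z) + - b * phi (- b * t + z))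
     / (t * (Q (- a * t + z) - Q (- b * t + z)))
     * / (2 * (1 - band_prob a b z t)))).
  { exists 0. intros t Ht. assert (H01 := band_prob_bounds a b z t Hab Ht).
    unfold logit_sqrt_rate, band_prob_deriv. rewrite HT in *.
    rewrite <- (std_normal_pdf_lin_opp a z t), <- (std_normal_pdf_lin_opp b z t).
    replace (- a * t - - z) with (- a * t + z) by ring.
    replace (- b * t - - z) with (- b * t + z) by ring.
    field. repeat split; lra. }
  replace (- (a ^ 2 / 2)) with (- (- a) ^ 2 * / (2 * (1 - (0 - 0)))) by field.
  apply is_lim_mult'; [apply is_lim_hazard_diff; lra|].
  apply is_lim_inv'; [|lra]. apply is_lim_scal_l'.
  apply is_lim_minus'; [apply is_lim_const|].
  apply (is_lim_ext (fun t => Q (- a * t + z) - Q (- b * t + z))); [intros; symmetry; apply HT|].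
  apply is_lim_minus'; apply is_lim_Q_lin; lra.
Qed.

Lemma is_lim_logit_sqrt_rate_band_zero (b z : R) : b < 0 ->
  is_lim (logit_sqrt_rate (band_prob 0 b z) (band_prob_deriv 0 b z)) p_infty 0.
Proof.
  intros Hb.
  assert (HT : is_lim (band_prob 0 b z) p_infty (Phi (- z) - 0)).
  { apply (is_lim_ext (fun t => Phi (- z) - Q (- b * t + z))).
    { intros t. unfold band_prob. rewrite (Phi_lin_Q b z t). do 3 f_equal. ring. }
    apply is_lim_minus'; [apply is_lim_const | apply is_lim_Q_lin; lra]. }
  assert (H0 := Phi_pos (- z)). assert (H1 := Phi_lt_1 (- z)).
  apply (is_lim_ext_loc (fun t => - b / 2 * (phi (- b * t + z) * / t)
                                  * / (band_prob 0 b z t * (1 - band_prob 0 b z t)))).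
  { exists 0. intros t Ht. assert (H01 := band_prob_bounds 0 b z t Hb Ht).
    unfold logit_sqrt_rate, band_prob_deriv.
    rewrite <- (std_normal_pdf_lin_opp b z t).
    replace (- b * t - - z) with (- b * t + z) by ring.
    field. repeat split; lra. }
  replace (Finite 0) with (Finite (- b / 2 * (0 * 0) * / ((Phi (- z) - 0) * (1 - (Phi (- z) - 0)))))
    by (f_equal; field; lra).
  apply is_lim_mult'; [apply is_lim_scal_l', is_lim_mult'; [|apply is_lim_inv_p]|].
  - apply is_lim_comp_lin_p, is_lim_std_normal_pdf_p. lra.
  - apply is_lim_inv'; [|nra].
    apply is_lim_mult'; [exact HT | apply is_lim_minus'; [apply is_lim_const | exact HT]].
Qed.

Lemma is_lim_logit_sqrt_rate_band_nonpos (a b z : R) : b < a <= 0 ->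
  is_lim (logit_sqrt_rate (band_prob a b z) (band_prob_deriv a b z)) p_infty (- (a ^ 2 / 2)).
Proof.
  intros [Hab [Ha | ->]].
  - apply is_lim_logit_sqrt_rate_band_below; lra.
  - replace (- (0 ^ 2 / 2)) with 0 by field. apply is_lim_logit_sqrt_rate_band_zero, Hab.
Qed.

Lemma is_lim_logit_sqrt_rate_band_reflect (a b z : R) (l : R) :
  is_lim (logit_sqrt_rate (band_prob (- b) (- a) (- z)) (band_prob_deriv (- b) (- a) (- z)))
    p_infty l ->
  is_lim (logit_sqrt_rate (band_prob a b z) (band_prob_deriv a b z)) p_infty l.
Proof.
  apply is_lim_ext. intros t. unfold logit_sqrt_rate.
  rewrite band_prob_reflect, band_prob_deriv_reflect. reflexivity.
Qed.

Lemma is_lim_logit_sqrt_rate_band (a b z : R) : b < a ->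
  is_lim (logit_sqrt_rate (band_prob a b z) (band_prob_deriv a b z)) p_infty
    ((1 / 2 - ind_notin (Finite b) (Finite a) 0) * Rmin (a ^ 2) (b ^ 2)).
Proof.
  intros Hab. unfold ind_notin.
  destruct (Rbar_lt_dec (Finite b) (Finite 0)) as [Hb|Hb]; simpl in Hb;
    [destruct (Rbar_lt_dec (Finite 0) (Finite a)) as [Ha|Ha]; simpl in Ha|].
  - destruct (Rle_dec a (- b)).
    + rewrite Rmin_left by nra. replace ((1 / 2 - 0) * a ^ 2) with (a ^ 2 / 2) by field.
      apply is_lim_logit_sqrt_rate_band_inside; lra.
    + rewrite Rmin_right by nra. replace ((1 / 2 - 0) * b ^ 2) with ((- b) ^ 2 / 2) by field.
      apply is_lim_logit_sqrt_rate_band_reflect, is_lim_logit_sqrt_rate_band_inside; lra.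
  - rewrite Rmin_left by nra. replace ((1 / 2 - 1) * a ^ 2) with (- (a ^ 2 / 2)) by field.
    apply is_lim_logit_sqrt_rate_band_nonpos; lra.
  - rewrite Rmin_right by nra. replace ((1 / 2 - 1) * b ^ 2) with (- ((- b) ^ 2 / 2)) by field.
    apply is_lim_logit_sqrt_rate_band_reflect, is_lim_logit_sqrt_rate_band_nonpos; lra.
Qed.

Definition is_lim_Derive_p (f : R -> R) (L : Rbar) : Prop :=
  (exists C : R, forall c : R, C < c -> ex_derive f c) /\
  is_lim (fun c => Derive f c) p_infty L.

Lemma is_lim_Derive_p_ext_pos (f g : R -> R) (L : Rbar) :
  (forall c, 0 < c -> f c = g c) -> is_lim_Derive_p g L -> is_lim_Derive_p f L.
Proof.
  intros Hfg [[C HC] HL].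
  assert (Hloc : forall c, 0 < c -> locally c (fun u => g u = f u)).
  { intros c Hc. apply (filter_imp (fun u => 0 < u)); [|now apply open_gt].
    intros u Hu. symmetry. apply Hfg, Hu. }
  split.
  - exists (Rmax C 0). intros c Hc.
    assert (C < c /\ 0 < c) as [HCc Hc0]
      by (generalize (Rmax_l C 0) (Rmax_r C 0); lra).
    apply (ex_derive_ext_loc g); [apply Hloc, Hc0 | apply HC, HCc].
  - apply (is_lim_ext_loc (fun c => Derive g c)); [|exact HL].
    exists 0. intros c Hc. apply Derive_ext_loc, Hloc, Hc.
Qed.

Lemma is_derive_logit_sqrt (T dT : R -> R) (c : R) : 0 < c ->
  is_derive T (sqrt c) (dT (sqrt c)) -> 0 < T (sqrt c) < 1 ->
  is_derive (fun c => logit (T (sqrt c))) c (logit_sqrt_rate T dT (sqrt c)).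
Proof.
  intros Hc HT HT01. assert (Hs : 0 < sqrt c) by (apply sqrt_lt_R0, Hc).
  unfold logit, logit_sqrt_rate. auto_derive.
  - repeat split; try lra; eexists; exact HT.
  - replace (Derive (fun x => T x) (sqrt c)) with (dT (sqrt c))
      by (symmetry; apply is_derive_unique, HT).
    field. repeat split; lra.
Qed.

Lemma is_lim_Derive_p_logit_sqrt (T dT : R -> R) (L : Rbar) :
  (forall t, 0 < t -> is_derive T t (dT t)) ->
  (forall t, 0 < t -> 0 < T t < 1) ->
  is_lim (logit_sqrt_rate T dT) p_infty L ->
  is_lim_Derive_p (fun c => logit (T (sqrt c))) L.
Proof.
  intros HT HT01 HL.
  assert (HD : forall c, 0 < c ->
            is_derive (fun c => logit (T (sqrt c))) c (logit_sqrt_rate T dT (sqrt c))).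
  { intros c Hc. assert (Hs : 0 < sqrt c) by (apply sqrt_lt_R0, Hc).
    apply is_derive_logit_sqrt; auto. }
  split.
  - exists 0. intros c Hc. eexists. apply HD, Hc.
  - apply (is_lim_ext_loc (fun c => logit_sqrt_rate T dT (sqrt c))).
    { exists 0. intros c Hc. symmetry. apply is_derive_unique, HD, Hc. }
    apply (is_lim_comp _ sqrt p_infty L p_infty HL).
    + apply is_lim_sqrt_p, is_lim_id.
    + exists 0. discriminate.
Qed.

Lemma std_arg_delta_hat (x delta_r Lambda z c : R) : 0 < c -> 0 < Lambda ->
  std_arg (Finite x) (delta_hat delta_r Lambda z c) (sqrt (/ c * Lambda))
  = Finite ((x - delta_r) / sqrt Lambda * sqrt c - z).
Proof.
  intros Hc HL. simpl. f_equal. unfold delta_hat.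
  assert (Hsc : 0 < sqrt c) by (apply sqrt_lt_R0, Hc).
  assert (HsL : 0 < sqrt Lambda) by (apply sqrt_lt_R0, HL).
  assert (E : sqrt (/ c * Lambda) = sqrt Lambda / sqrt c).
  { rewrite sqrt_mult, sqrt_inv by (try apply Rlt_le, Rinv_0_lt_compat; lra). field. lra. }
  replace (Lambda / c) with (/ c * Lambda) by (unfold Rdiv; ring).
  rewrite E. field. lra.
Qed.

Lemma std_arg_standardize (d : Rbar) (delta_r Lambda z c : R) : 0 < c -> 0 < Lambda ->
  std_arg d (delta_hat delta_r Lambda z c) (sqrt (/ c * Lambda))
  = std_arg (std_arg d delta_r (sqrt Lambda)) (delta_hat 0 1 z c) (sqrt (/ c * 1)).
Proof.
  intros Hc HL. destruct d as [x| |]; [|reflexivity|reflexivity].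
  change (std_arg (Finite x) delta_r (sqrt Lambda)) with (Finite ((x - delta_r) / sqrt Lambda)).
  rewrite !std_arg_delta_hat, sqrt_1 by lra. f_equal. field. apply Rgt_not_eq, sqrt_lt_R0, HL.
Qed.

Lemma tau_standardize (delta_r Lambda z : R) (dL dU : Rbar) (c : R) : 0 < c -> 0 < Lambda ->
  tau delta_r Lambda z dL dU c
  = tau 0 1 z (std_arg dL delta_r (sqrt Lambda)) (std_arg dU delta_r (sqrt Lambda)) c.
Proof.
  intros Hc HL. unfold tau. rewrite !(std_arg_standardize _ delta_r Lambda) by assumption.
  reflexivity.
Qed.

Lemma std_arg_std (a z c : R) : 0 < c ->
  std_arg (Finite a) (delta_hat 0 1 z c) (sqrt (/ c * 1)) = Finite (a * sqrt c - z).
Proof. intros Hc. rewrite std_arg_delta_hat, sqrt_1 by lra. f_equal. field. Qed.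

Lemma std_arg_lt_iff (d : Rbar) (r s : R) : 0 < s ->
  (Rbar_lt d (Finite r) <-> Rbar_lt (std_arg d r s) (Finite 0))
  /\ (Rbar_lt (Finite r) d <-> Rbar_lt (Finite 0) (std_arg d r s)).
Proof.
  intros Hs. destruct d as [x| |]; simpl; [|tauto|tauto].
  assert (E : x - r = (x - r) / s * s) by (field; lra).
  split; split; intros H; nra.
Qed.

Lemma ind_notin_std_arg (dL dU : Rbar) (r s : R) : 0 < s ->
  ind_notin dL dU r = ind_notin (std_arg dL r s) (std_arg dU r s) 0.
Proof.
  intros Hs. destruct (std_arg_lt_iff dL r s Hs) as [HL _].
  destruct (std_arg_lt_iff dU r s Hs) as [_ HU].
  unfold ind_notin.
  destruct (Rbar_lt_dec dL r), (Rbar_lt_dec (std_arg dL r s) 0); try tauto.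
  destruct (Rbar_lt_dec r dU), (Rbar_lt_dec 0 (std_arg dU r s)); tauto.
Qed.

Lemma sq_scaled_std_arg (d : Rbar) (r Lambda : R) : 0 < Lambda ->
  sq_scaled d r Lambda = sq_scaled (std_arg d r (sqrt Lambda)) 0 1.
Proof.
  intros HL. destruct d as [x| |]; [simpl; f_equal|reflexivity|reflexivity].
  assert (HsL : 0 < sqrt Lambda) by (apply sqrt_lt_R0, HL).
  replace Lambda with (sqrt Lambda * sqrt Lambda) at 1 by (apply sqrt_sqrt; lra).
  field. lra.
Qed.

Lemma std_arg_Rbar_lt (dL dU : Rbar) (r s : R) : 0 < s ->
  Rbar_lt dL dU -> Rbar_lt (std_arg dL r s) (std_arg dU r s).
Proof.
  intros Hs. destruct dL as [xL| |], dU as [xU| |]; simpl; try tauto.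
  intros H. unfold Rdiv. apply Rmult_lt_compat_r; [apply Rinv_0_lt_compat|]; lra.
Qed.

Lemma is_lim_Derive_logit_tau_band (a b z : R) : b < a ->
  is_lim_Derive_p (fun c => logit (tau 0 1 z (Finite b) (Finite a) c))
    ((1 / 2 - ind_notin (Finite b) (Finite a) 0) * Rmin (a ^ 2) (b ^ 2)).
Proof.
  intros Hab.
  apply (is_lim_Derive_p_ext_pos _ (fun c => logit (band_prob a b z (sqrt c)))).
  { intros c Hc. unfold tau. rewrite !std_arg_std by exact Hc. reflexivity. }
  apply (is_lim_Derive_p_logit_sqrt _ (band_prob_deriv a b z)).
  - intros t _. apply is_derive_band_prob.
  - intros t Ht. apply band_prob_bounds; assumption.
  - apply is_lim_logit_sqrt_rate_band, Hab.
Qed.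

Lemma is_lim_Derive_logit_tau_upper (a z : R) :
  is_lim_Derive_p (fun c => logit (tau 0 1 z m_infty (Finite a) c))
    ((1 / 2 - ind_notin m_infty (Finite a) 0) * a ^ 2).
Proof.
  apply (is_lim_Derive_p_ext_pos _ (fun c => logit (Phi (a * sqrt c - z)))).
  { intros c Hc. unfold tau. rewrite std_arg_std by exact Hc. cbn [PhiBar std_arg].
    now rewrite Rminus_0_r. }
  apply (is_lim_Derive_p_logit_sqrt (fun t => Phi (a * t - z)) (fun t => a * phi (a * t - z))).
  - intros t _. apply is_derive_Phi_lin.
  - intros t _. split; [apply Phi_pos | apply Phi_lt_1].
  - apply is_lim_logit_sqrt_rate_Phi.
Qed.

Lemma is_lim_Derive_logit_tau_lower (b z : R) :
  is_lim_Derive_p (fun c => logit (tau 0 1 z (Finite b) p_infty c))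
    ((1 / 2 - ind_notin (Finite b) p_infty 0) * b ^ 2).
Proof.
  replace ((1 / 2 - ind_notin (Finite b) p_infty 0) * b ^ 2)
    with ((1 / 2 - ind_notin m_infty (Finite (- b)) 0) * (- b) ^ 2).
  2:{ unfold ind_notin. repeat destruct Rbar_lt_dec; simpl in *; try ring; exfalso; lra. }
  apply (is_lim_Derive_p_ext_pos _ (fun c => logit (tau 0 1 (- z) m_infty (Finite (- b)) c))).
  { intros c Hc. unfold tau. rewrite !std_arg_std by exact Hc. cbn [PhiBar std_arg].
    rewrite <- (Phi_lin_opp b z (sqrt c)). f_equal. ring. }
  apply is_lim_Derive_logit_tau_upper.
Qed.

Lemma is_lim_Derive_logit_tau_std (dL dU : Rbar) (z : R) :
  Rbar_lt dL dU -> ~ (dL = m_infty /\ dU = p_infty) ->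
  is_lim_Derive_p (fun c => logit (tau 0 1 z dL dU c))
    (Rbar_mult (Finite (1 / 2 - ind_notin dL dU 0))
       (Rbar_min (sq_scaled dU 0 1) (sq_scaled dL 0 1))).
Proof.
  intros Hlt Hnot.
  destruct dL as [b| |], dU as [a| |]; simpl in Hlt; try tauto; cbn [sq_scaled];
    rewrite ?Rminus_0_r, ?Rdiv_1_r.
  - apply is_lim_Derive_logit_tau_band, Hlt.
  - apply is_lim_Derive_logit_tau_lower.
  - apply is_lim_Derive_logit_tau_upper.
Qed.

Theorem theorem1 (delta_r Lambda : R) (dL dU : Rbar) (u z : R) :
  0 < Lambda ->
  Rbar_lt dL dU ->
  ~ (dL = m_infty /\ dU = p_infty) ->
  0 < u < 1 ->
  Phi z = u ->
  (exists C : R, forall c : R, C < c ->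
      ex_derive (fun c' => logit (tau delta_r Lambda z dL dU c')) c) /\
  is_lim (fun c => Derive (fun c' => logit (tau delta_r Lambda z dL dU c')) c)
    p_infty
    (Rbar_mult (Finite (1 / 2 - ind_notin dL dU delta_r))
       (Rbar_min (sq_scaled dU delta_r Lambda) (sq_scaled dL delta_r Lambda))).
Proof.
  (* the hypotheses on u only say z = Phi^-1(u); the limit holds for every z *)
  intros HL Hlt Hnot _ _.
  assert (HsL : 0 < sqrt Lambda) by (apply sqrt_lt_R0, HL).
  rewrite (ind_notin_std_arg dL dU delta_r (sqrt Lambda) HsL),
    !(sq_scaled_std_arg _ delta_r Lambda HL).
  apply (is_lim_Derive_p_ext_pos _ (fun c => logit (tau 0 1 z
           (std_arg dL delta_r (sqrt Lambda)) (std_arg dU delta_r (sqrt Lambda)) c))).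
  { intros c Hc. now rewrite tau_standardize. }
  apply is_lim_Derive_logit_tau_std.
  - apply std_arg_Rbar_lt; assumption.
  - destruct dL, dU; simpl; intros [H1 H2]; try discriminate; tauto.
Qed.
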